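(* Let $n\ge2$, $t>0$ and $\bm{N}=(t,0,\ldots,0,-t)\in\mathbb{R}^{n+1}$. Then the uniform average of the vertices of $\mathcal{F}_n(\bm{N})$ is the flow $\bm{f}$ given by \[ f_{0,n}=t\,2^{-(n-1)},\quad f_{0,k}=t\,2^{-k}\ (1\le k\le n-1),\quad f_{i,n}=t\,2^{-(n-i)}\ (1\le i\le n-1),\quad f_{i,k}=t\,2^{-(k-i+1)}\ (1\le i<k\le n-1). \] Equivalently, it is represented by $t$ times the $n\times n$ matrix $A=(a_{ij})_{0\le i,j\le n-1}$ with $a_{00}=2^{-(n-1)}$, $a_{0j}=2^{-(n-j)}$ for $j\ge1$, $a_{i0}=2^{-(n-i)}$ for $i\ge1$, $a_{ij}=2^{-(n-i-j+1)}$ for $i,j\ge1$, $i+j<n$, $a_{i,n-i}=\tfrac12$ for $1\le i\le n-1$, and $a_{ij}=0$ for $i+j>n$.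
   Context: $\mathcal{F}_n(\bm{N})$ is the polytope of $\bm{f}=(f_{ij})_{0\le i<j\le n}\in\mathbb{R}_{\ge0}^{\binom{n+1}{2}}$ with $\sum_{j>i} f_{ij}-\sum_{k<i} f_{ki}=N_i$ for every $i\in\{0,\ldots,n\}$. The matrix form of $\bm f$ is $(a_{ij})$ with $a_{ij}=f_{i,n-j}$ for $i+j\le n-1$, $a_{i,n-i}=\sum_{k<i}(N_k-f_{k,i})$ for $1\le i\le n-1$, zero otherwise. The uniform average of vertices is the arithmetic mean of the vertices. *)

From HB Require Import structures.
From mathcomp Require Import all_boot all_order all_algebra.
Set Implicit Arguments. Unset Strict Implicit. Unset Printing Implicit Defensive.
Import Order.TTheory GRing.Theory Num.Theory.
Local Open Scope ring_scope.

Notation edge n := {p : 'I_n.+1 * 'I_n.+1 | (p.1 < p.2)%N}.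

Notation flow R n := {ffun edge n -> R}.

Definition in_flow_polytope (R : realFieldType) (n : nat) (N : 'I_n.+1 -> R)
    (f : flow R n) : Prop :=
  (forall e, 0 <= f e) /\
  (forall i : 'I_n.+1,
     \sum_(e : edge n | (val e).1 == i) f e
     - \sum_(e : edge n | (val e).2 == i) f e = N i).

Definition is_vertex (R : realFieldType) (n : nat) (P : flow R n -> Prop)
    (f : flow R n) : Prop :=
  P f /\
  forall (g h : flow R n) (l : R), P g -> P h -> 0 < l -> l < 1 ->
    (forall e, f e = l * g e + (1 - l) * h e) -> g = h.

Definition Nvec (R : realFieldType) (n : nat) (t : R) (i : 'I_n.+1) : R :=
  if val i == 0%N then t else if val i == n then - t else 0.

Definition favg (R : realFieldType) (n : nat) (t : R) : flow R n :=
  [ffun e : edge n =>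
     let i := val (val e).1 in let k := val (val e).2 in
     if i == 0%N then
       (if k == n then t * 2 ^- (n - 1) else t * 2 ^- k)
     else
       (if k == n then t * 2 ^- (n - i) else t * 2 ^- (k - i + 1))].

(* f_{ij} as a function of natural indices (0 outside the edge set). *)
Definition fval (R : realFieldType) (n : nat) (f : flow R n) (i j : nat) : R :=
  odflt 0 (omap f (insub (inord i, inord j) : option (edge n))).

Definition matrix_form (R : realFieldType) (n : nat) (N : 'I_n.+1 -> R)
    (f : flow R n) : 'M[R]_n :=
  \matrix_(i < n, j < n)
    if (i + j <= n - 1)%N then fval f i (n - j)
    else if (i + j == n)%N && (1 <= i)%N then
      \sum_(k < n.+1 | (k < i)%N) (N k - fval f k i)
    else 0.

Definition Amat (R : realFieldType) (n : nat) : 'M[R]_n :=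
  \matrix_(i < n, j < n)
    if (i == 0%N :> nat) && (j == 0%N :> nat) then 2 ^- (n - 1)
    else if (i == 0%N :> nat) then 2 ^- (n - j)
    else if (j == 0%N :> nat) then 2 ^- (n - i)
    else if (i + j < n)%N then 2 ^- (n - i - j + 1)
    else if (i + j == n)%N then 2^-1
    else 0.

From HB Require Import structures.
From mathcomp Require Import all_boot all_order all_algebra.
From mathcomp Require Import zify ring.
Set Implicit Arguments. Unset Strict Implicit. Unset Printing Implicit Defensive.
Import Order.TTheory GRing.Theory Num.Theory.
Local Open Scope ring_scope.

(* For N = (t, 0, ..., 0, -t) the vertices of the flow polytope are the path
   flows: t on the edges of a path from 0 to n and 0 elsewhere.  A path flow is
   a vertex because flow conservation, read from the source onwards, determines
   every nonnegative flow supported on the path.  Conversely, following positive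
   outflow from 0 gives a path in the support of any flow f; subtracting a small
   multiple of its path flow and rescaling stays in the polytope, so f is a
   proper convex combination unless it is that path flow.
   A path is determined by its vertex set, any subset of {0, ..., n} containing
   0 and n.  Those using the edge (i, k) are the sets containing i and k and
   avoiding i < m < k, so they form a 2^-r fraction of all paths, r being the
   number of inner vertices in [i, k], and t 2^-r is the average flow on
   (i, k).  On the antidiagonal of the matrix form these entries sum to a
   geometric series equal to 1/2. *)

Lemma card_ffun_pattern (I : finType) (F : {set I}) (a : I -> bool) :
  #|[pred T : {ffun I -> bool} | [forall m in F, T m == a m]]| = (2 ^ #|~: F|)%N.
Proof.
pose P m : pred bool := if m \in F then pred1 (a m) else predT.
rewrite (eq_card (B := family P)) => [|T]; last first.
  rewrite !inE; apply/forall_inP/familyP => /= T_eq m.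
    by rewrite /P; case: ifP => // /T_eq.
  by move=> mF; have := T_eq m; rewrite /P mF.
rewrite card_family foldrE big_map big_enum /= -prod_nat_const.
rewrite (bigID (mem F)) /= big1 ?mul1n => [|m mF]; last by rewrite /P mF card1.
by apply: eq_big => [m|m /negbTE mF]; rewrite ?inE // /P mF card_bool.
Qed.

Lemma card_ord_interval (N a b : nat) :
  #|[set m : 'I_N | a <= m < b]%N| = (minn b N - a)%N.
Proof.
rewrite -sum1dep_card big_mkcond /=.
rewrite -(big_mkord xpredT (fun m => if (a <= m < b)%N then 1%N else 0%N)).
elim: N => [|N IH]; first by rewrite big_geq //; lia.
rewrite big_nat_recr //= IH; case: ifP => /andP; lia.
Qed.

Section Paths.
Variable n : nat.
Implicit Types (T : {ffun 'I_n.+1 -> bool}) (e : edge n) (i : 'I_n.+1).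

(* A path from [0] to [n] in the complete DAG on [{0, ..., n}] is encoded by
   its vertex set [T]; its edges join consecutive elements of [T]. *)
Definition path_edge T e : bool :=
  [&& T (val e).1, T (val e).2 &
      [forall m : 'I_n.+1, ((val e).1 < m < (val e).2)%N ==> ~~ T m]].

Definition is_path T : bool := T ord0 && T ord_max.

Lemma edge_inj e e' :
  (val e).1 = (val e').1 -> (val e).2 = (val e').2 -> e = e'.
Proof.
by move=> E1 E2; apply/val_inj; case: (val e) (val e') E1 E2 => [a b] [c d] /= -> ->.
Qed.

Lemma path_edge_src_inj T e e' : path_edge T e -> path_edge T e' ->
  (val e).1 = (val e').1 -> e = e'.
Proof.
move=> /and3P[_ Tk /forallP Te] /and3P[_ Tk' /forallP Te'] Ei.
have ik := valP e; have ik' := valP e'.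
apply: edge_inj => //; apply/val_inj.
case: (ltngtP (val (val e).2) (val (val e').2)) => // lt.
- by move: (Te' (val e).2); rewrite -Ei lt ik Tk.
- by move: (Te (val e').2); rewrite Ei lt ik' Tk'.
Qed.

Lemma path_edge_dst_inj T e e' : path_edge T e -> path_edge T e' ->
  (val e).2 = (val e').2 -> e = e'.
Proof.
move=> /and3P[Ti _ /forallP Te] /and3P[Ti' _ /forallP Te'] Ek.
have ik := valP e; have ik' := valP e'.
apply: edge_inj => //; apply/val_inj.
case: (ltngtP (val (val e).1) (val (val e').1)) => // lt.
- by move: (Te (val e').1); rewrite Ek lt ik' Ti'.
- by move: (Te' (val e).1); rewrite -Ek lt ik Ti.
Qed.

Lemma path_edge_from T i : T i -> T ord_max -> i != ord_max ->
  exists2 e, path_edge T e & (val e).1 = i.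
Proof.
move=> Ti Tn ni.
have in_max : (i < @ord_max n)%N && T ord_max.
  by rewrite Tn andbT; have := ltn_ord i; move: ni; rewrite -(inj_eq val_inj) /=; lia.
case: (@arg_minnP _ ord_max (fun j => (i < j)%N && T j) val in_max).
move=> j /andP[ij Tj] j_min.
exists (exist _ (i, j) ij) => //; rewrite /path_edge /= Ti Tj /=.
apply/forall_inP => m /andP[im mj]; apply: contraTN mj => Tm.
by rewrite -leqNgt; apply: j_min; rewrite im.
Qed.

Lemma path_edge_to T i : T i -> T ord0 -> i != ord0 ->
  exists2 e, path_edge T e & (val e).2 = i.
Proof.
move=> Ti T0 ni.
have in_0 : (@ord0 n < i)%N && T ord0.
  by rewrite T0 andbT; move: ni; rewrite -(inj_eq val_inj) /=; lia.
case: (@arg_maxnP _ ord0 (fun j => (j < i)%N && T j) val in_0).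
move=> j /andP[ji Tj] j_max.
exists (exist _ (j, i) ji) => //; rewrite /path_edge /= Ti Tj /=.
apply/forall_inP => m /andP[jm mi]; apply: contraTN jm => Tm.
by rewrite -leqNgt; apply: j_max; rewrite mi.
Qed.

Lemma path_edge_cons T e e' : T (val e).2 -> (forall m, T m -> (val e).2 <= m)%N ->
  path_edge [ffun m => (m == (val e).1) || T m] e' -> e' = e \/ path_edge T e'.
Proof.
case: e => [[i j] /= ij] Tj T_ge; have ik' := valP e'.
case/and3P; rewrite !ffunE => Ti' Tk' /forallP between'.
have [e'i|ne'i] := eqVneq (val e').1 i.
  left; apply: edge_inj => //; apply/val_inj.
  case: (ltngtP (val (val e').2) (val j)) => // lt.
    case/orP: Tk' => [/eqP k'i|/T_ge]; last by rewrite leqNgt lt.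
    by move: ik'; rewrite k'i e'i ltnn.
  by have := between' j; rewrite ffunE Tj orbT e'i ij lt.
right; rewrite (negbTE ne'i) /= in Ti'; rewrite /path_edge Ti' /=.
have -> /= : T (val e').2.
  case/orP: Tk' => // /eqP k'i; have := T_ge _ Ti'.
  by rewrite leqNgt (ltn_trans _ ij) // -k'i.
apply/forallP => m; apply/implyP => m_mid.
by have := implyP (between' m) m_mid; rewrite ffunE negb_or => /andP[].
Qed.

Definition path_ends : {set 'I_n.+1} := [set ord0; ord_max].
Definition edge_span e : {set 'I_n.+1} :=
  [set m : 'I_n.+1 | (val e).1 <= m <= (val e).2]%N.
Definition inner_span e : {set 'I_n.+1} := ~: path_ends :&: edge_span e.

Lemma is_path_pattern T : is_path T = [forall m in path_ends, T m == true].
Proof.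
apply/andP/forall_inP => [[T0 Tn] m|T_ends].
  by rewrite !inE => /orP[]/eqP->; rewrite ?T0 ?Tn.
by rewrite !(eqP (T_ends _ _)) ?inE ?eqxx ?orbT.
Qed.

Lemma path_through_pattern T e : is_path T && path_edge T e =
  [forall m in path_ends :|: edge_span e, T m == ~~ ((val e).1 < m < (val e).2)%N].
Proof.
case: e => [[i k] /= ik].
apply/idP/forall_inP => [/andP[/andP[T0 Tn] /and3P[Ti Tk /forallP T_out]] m|T_eq].
  have [m_mid|m_side] := boolP (i < m < k)%N.
    by move=> _; apply/eqP/negbTE; have := T_out m; rewrite m_mid.
  rewrite !inE => m_in; apply/eqP.
  have : [|| m == ord0, m == ord_max, m == i | m == k].
    by move: m_in m_side; rewrite -!(inj_eq val_inj) /=; lia.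
  by case/or4P => /eqP->.
have T_at m : m \in path_ends :|: edge_span (exist _ (i, k) ik) ->
    T m = ~~ (i < m < k)%N by move/T_eq/eqP.
have T_end m : (m == ord0) || (m == ord_max) -> T m = ~~ (i < m < k)%N.
  by move=> m_end; apply: T_at; rewrite !inE m_end.
have T_span (m : 'I_n.+1) : (i <= m <= k)%N -> T m = ~~ (i < m < k)%N.
  by move=> m_span; apply: T_at; rewrite !inE m_span orbT.
rewrite /is_path /path_edge /= T_end ?eqxx // T_end ?eqxx ?orbT //.
rewrite !T_span ?leqnn ?(ltnW ik) //= !ltnn !andbF (ltn_geF (ltn_ord k)) andbF /=.
apply/forallP => m; apply/implyP => m_mid; rewrite T_span ?m_mid //.
by case/andP: m_mid => /ltnW-> /ltnW->.
Qed.

Definition paths_through e : pred {ffun 'I_n.+1 -> bool} :=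
  [pred T | is_path T && path_edge T e].

Lemma card_paths : #|is_path| = (2 ^ #|~: path_ends|)%N.
Proof.
rewrite -(card_ffun_pattern _ (fun=> true)).
by apply: eq_card => T; rewrite inE -is_path_pattern.
Qed.

Lemma card_paths_through e :
  #|paths_through e| = (2 ^ #|~: path_ends :\: edge_span e|)%N.
Proof.
pose a (m : 'I_n.+1) := ~~ ((val e).1 < m < (val e).2)%N.
rewrite setDE -setCU -(card_ffun_pattern _ a).
by apply: eq_card => T; rewrite !inE path_through_pattern.
Qed.

Lemma card_inner_span e :
  #|inner_span e| = (minn n (val e).2.+1 - maxn 1 (val e).1)%N.
Proof.
case: e => [[i k] /= ik].
rewrite (_ : inner_span _ = [set m : 'I_n.+1 | maxn 1 i <= m < minn n k.+1]%N).
  by rewrite card_ord_interval; lia.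
apply/setP => m; rewrite !inE -!(inj_eq val_inj) /=.
by have := ltn_ord m; lia.
Qed.

End Paths.

Section PathFlows.
Variables (R : realFieldType) (n : nat).
Implicit Types (t : R) (T : {ffun 'I_n.+1 -> bool}) (e : edge n)
  (f g h p : flow R n) (N : 'I_n.+1 -> R) (i : 'I_n.+1).

Definition outflow f i : R := \sum_(e : edge n | (val e).1 == i) f e.
Definition inflow f i : R := \sum_(e : edge n | (val e).2 == i) f e.

Definition path_flow (t : R) T : flow R n :=
  [ffun e => if path_edge T e then t else 0].

Lemma path_flow_ge0 t T e : 0 <= t -> 0 <= path_flow t T e.
Proof. by rewrite ffunE; case: ifP. Qed.

Lemma outflow_path_flow t T i : 0 <= t -> T ord_max ->
  outflow (path_flow t T) i = if T i && (i != ord_max) then t else 0.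
Proof.
move=> t0 Tn; case: ifPn => [/andP[Ti ni]|].
  have [e Te ei] := path_edge_from Ti Tn ni.
  rewrite /outflow (bigD1 e) ?ei //= big1 ?ffunE ?Te ?addr0 // => e' /andP[/eqP e'i ne'e].
  rewrite ffunE; case: ifP => // Te'.
  by case/eqP: ne'e; apply: (path_edge_src_inj Te' Te); rewrite e'i ei.
apply: contraNeq => /eqP out_neq0.
have [e /andP[/eqP <-]] := psumr_neq0P (fun e _ => path_flow_ge0 T e t0) out_neq0.
rewrite ffunE; case: ifP; rewrite ?ltxx // => /and3P[Ti _ _] _.
have := valP e; have := ltn_ord (val e).2; rewrite Ti -(inj_eq val_inj) /=; lia.
Qed.

Lemma inflow_path_flow t T i : 0 <= t -> T ord0 ->
  inflow (path_flow t T) i = if T i && (i != ord0) then t else 0.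
Proof.
move=> t0 T0; case: ifPn => [/andP[Ti ni]|].
  have [e Te ei] := path_edge_to Ti T0 ni.
  rewrite /inflow (bigD1 e) ?ei //= big1 ?ffunE ?Te ?addr0 // => e' /andP[/eqP e'i ne'e].
  rewrite ffunE; case: ifP => // Te'.
  by case/eqP: ne'e; apply: (path_edge_dst_inj Te' Te); rewrite e'i ei.
apply: contraNeq => /eqP in_neq0.
have [e /andP[/eqP <-]] := psumr_neq0P (fun e _ => path_flow_ge0 T e t0) in_neq0.
rewrite ffunE; case: ifP; rewrite ?ltxx // => /and3P[_ Tk _] _.
have := valP e; rewrite Tk -(inj_eq val_inj) /=; lia.
Qed.

Lemma NvecE t i :
  Nvec t i = if i == ord0 then t else if i == ord_max then - t else 0.
Proof. by rewrite /Nvec -!(inj_eq val_inj). Qed.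

Lemma path_flow_in_polytope t T : (0 < n)%N -> 0 <= t -> is_path T ->
  in_flow_polytope (Nvec t) (path_flow t T).
Proof.
move=> n_gt0 t0 /andP[T0 Tn]; split=> [e|i]; first exact: path_flow_ge0.
have max_neq0 : (@ord_max n == ord0) = false by rewrite -(inj_eq val_inj) /= gtn_eqF.
rewrite -/(outflow _ i) -/(inflow _ i) outflow_path_flow // inflow_path_flow // NvecE.
have [->|i0] := eqVneq i ord0; first by rewrite T0 eq_sym max_neq0 /= subr0.
have [->|iN] := eqVneq i ord_max; first by rewrite Tn /= sub0r.
by case: (T i); rewrite /= subrr.
Qed.

Lemma flow_eq_of_path_support N T g h :
  in_flow_polytope N g -> in_flow_polytope N h ->
  (forall e, ~~ path_edge T e -> g e = 0) ->
  (forall e, ~~ path_edge T e -> h e = 0) -> g = h.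
Proof.
move=> [_ g_cons] [_ h_cons] g_supp h_supp.
have outflow_path_edge f e : (forall e', ~~ path_edge T e' -> f e' = 0) ->
    path_edge T e -> outflow f (val e).1 = f e.
  move=> f_supp Te; rewrite /outflow (bigD1 e) //= big1 ?addr0 //.
  move=> e' /andP[/eqP e'e ne'].
  by apply: f_supp; apply: contraNN ne' => Te'; apply/eqP/(path_edge_src_inj Te').
(* Conservation at the source of a path edge determines its value from the
   incoming path edge, whose source is smaller. *)
suff eq_on_path k e : path_edge T e -> ((val e).1 < k)%N -> g e = h e.
  apply/ffunP => e; case Te: (path_edge T e).
    exact: (eq_on_path n.+1 e Te (ltn_ord _)).
  by rewrite g_supp ?h_supp ?Te.
elim: k e => [//|k IH] e Te e_lt.
have in_eq : inflow g (val e).1 = inflow h (val e).1.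
  apply: eq_bigr => e' /eqP e'i; have [Te'|nTe'] := boolP (path_edge T e').
    by apply: IH Te' (leq_trans (valP e') _); rewrite e'i -ltnS.
  by rewrite g_supp ?h_supp.
have := g_cons (val e).1; rewrite -(h_cons (val e).1).
rewrite -/(outflow g _) -/(inflow g _) -/(outflow h _) -/(inflow h _) in_eq.
by rewrite !outflow_path_edge // => /addIr.
Qed.

Lemma path_flow_is_vertex t T : (0 < n)%N -> 0 <= t -> is_path T ->
  is_vertex (in_flow_polytope (Nvec t)) (path_flow t T).
Proof.
move=> n_gt0 t0 pT; split=> [|g h l g_in h_in l_gt0 l_lt1 p_eq].
  exact: path_flow_in_polytope.
have off_path e : ~~ path_edge T e -> g e = 0 /\ h e = 0.
  move=> nTe; have /esym/eqP := p_eq e; rewrite ffunE (negbTE nTe).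
  rewrite paddr_eq0 ?mulr_ge0 ?g_in.1 ?h_in.1 ?subr_ge0 ?ltW //.
  by rewrite !mulf_eq0 !(gt_eqF l_gt0) subr_eq0 (gt_eqF l_lt1) => /andP[/eqP-> /eqP->].
apply: (flow_eq_of_path_support g_in h_in) => e /off_path[]//.
Qed.

Lemma vertex_eq_of_scaled_le N f p l :
  is_vertex (in_flow_polytope N) f -> in_flow_polytope N p ->
  0 < l -> l < 1 -> (forall e, l * p e <= f e) -> f = p.
Proof.
move=> [[_ f_cons] f_ext] p_in l_gt0 l_lt1 lp_le; have p_cons := p_in.2.
have l1_neq0 : 1 - l != 0 by rewrite subr_eq0 gt_eqF.
pose g : flow R n := [ffun e => (f e - l * p e) / (1 - l)].
have sum_g (P : pred (edge n)) : \sum_(e | P e) g e =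
    (\sum_(e | P e) f e - l * \sum_(e | P e) p e) / (1 - l).
  by rewrite mulr_sumr -sumrB mulr_suml; apply: eq_bigr => e _; rewrite ffunE.
have g_in : in_flow_polytope N g.
  split=> [e|i]; first by rewrite ffunE divr_ge0 // subr_ge0 ?lp_le ?ltW.
  rewrite !sum_g -mulrBl -/(outflow f i) -/(inflow f i) -/(outflow p i) -/(inflow p i).
  have -> : outflow f i - l * outflow p i - (inflow f i - l * inflow p i) =
      (outflow f i - inflow f i) - l * (outflow p i - inflow p i) by ring.
  by rewrite f_cons p_cons; field.
have f_comb e : f e = l * p e + (1 - l) * g e.
  by rewrite ffunE [(1 - l) * _]mulrC divfK // addrC subrK.
have pg := f_ext p g l p_in g_in l_gt0 l_lt1 f_comb.
by apply/ffunP => e; rewrite f_comb -pg -mulrDl addrC subrK mul1r.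
Qed.

Lemma path_from_pos_outflow N f i : in_flow_polytope N f ->
  (forall j, j != ord_max -> 0 <= N j) ->
  (i == ord_max) || (0 < outflow f i) ->
  exists T, [/\ T i, T ord_max, (forall m, T m -> i <= m)%N
               & forall e, path_edge T e -> 0 < f e].
Proof.
move=> [f_ge0 f_cons] N_ge0.
have from_sink : exists T, [/\ T ord_max, T ord_max,
    (forall m, T m -> @ord_max n <= m)%N & forall e, path_edge T e -> 0 < f e].
  exists [ffun m => m == ord_max]; split=> [||m|e]; rewrite ?ffunE //.
    by move=> /eqP->.
  by case/and3P; rewrite !ffunE => /eqP Ei /eqP Ek; have := valP e; rewrite Ei Ek ltnn.
move: {2}(n - i)%N (leqnn (n - i)) => k; elim: k i => [|k IH] i i_le.
  rewrite (_ : i = ord_max) ?eqxx //; apply/val_inj.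
  by have := ltn_ord i; move: i_le => /=; lia.
have [-> _ //|ni] := eqVneq i ord_max; rewrite orFb => out_pos.
have [e /andP[/eqP ei fe_gt0]] :=
  psumr_neq0P (fun e _ => f_ge0 e) (elimF eqP (gt_eqF out_pos)).
set j := (val e).2; have ij : (i < j)%N by rewrite -ei (valP e).
have j_start : (j == ord_max) || (0 < outflow f j).
  have [//|nj] := eqVneq j ord_max; apply: (lt_le_trans fe_gt0).
  have := f_cons j; rewrite -/(outflow f j) -/(inflow f j) => /eqP.
  rewrite subr_eq => /eqP->; apply: ler_wpDl; first exact: N_ge0.
  by rewrite /inflow (bigD1 e) //= lerDl sumr_ge0.
have j_le : (n - j <= k)%N by move: i_le ij; lia.
have [T' [T'j T'n T'_ge T'_pos]] := IH j j_le j_start.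
exists [ffun m => (m == i) || T' m]; split=> [||m|e'].
- by rewrite ffunE eqxx.
- by rewrite ffunE T'n orbT.
- by rewrite ffunE => /orP[/eqP->//|/T'_ge]; exact: leq_trans (ltnW ij).
rewrite -ei => T_e'.
by have [->|/T'_pos] := path_edge_cons T'j T'_ge T_e'.
Qed.

Lemma Nvec_ge0 t i : 0 <= t -> i != ord_max -> 0 <= Nvec t i.
Proof. by move=> t0 ni; rewrite NvecE (negbTE ni); case: ifP. Qed.

Lemma vertex_is_path_flow t f : (0 < n)%N -> 0 < t ->
  is_vertex (in_flow_polytope (Nvec t)) f -> exists2 T, is_path T & f = path_flow t T.
Proof.
move=> n_gt0 t_gt0 f_vert; have [f_in _] := f_vert.
have in0 : inflow f ord0 = 0.
  by apply: big1 => e /eqP e0; have := valP e; rewrite e0 ltn0.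
have out0 : 0 < outflow f ord0.
  have := f_in.2 ord0; rewrite -/(outflow f _) -/(inflow f _).
  by rewrite in0 subr0 NvecE eqxx => ->.
have start : (@ord0 n == ord_max) || (0 < outflow f ord0) by rewrite out0 orbT.
have [T [T0 Tn _ T_pos]] :=
  path_from_pos_outflow f_in (fun j => Nvec_ge0 (ltW t_gt0)) start.
(* [l * path_flow t T <= f], and the default 1/2 keeps [l < 1]. *)
pose l := \big[Num.min/2^-1]_(e | path_edge T e) (f e / t).
have l_gt0 : 0 < l.
  by apply/bigmin_gtP; split=> [|e /T_pos fe_gt0]; rewrite ?invr_gt0 ?divr_gt0.
have l_lt1 : l < 1.
  by apply: le_lt_trans (bigmin_le_id _ _ _ _) _; rewrite invf_lt1 ?ltr1n.
have T_path : is_path T by rewrite /is_path T0 Tn.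
exists T => //; apply: (vertex_eq_of_scaled_le f_vert _ l_gt0 l_lt1) => [|e].
  exact: path_flow_in_polytope (ltW t_gt0) T_path.
rewrite ffunE; case: ifP => Te; last by rewrite mulr0 f_in.1.
by rewrite -ler_pdivlMr // bigmin_le_cond.
Qed.

Lemma path_flow_inj t T T' : t != 0 -> is_path T -> is_path T' ->
  path_flow t T = path_flow t T' -> T = T'.
Proof.
move=> t_neq0 /andP[_ Tn] /andP[_ T'n] /ffunP eq_flow.
have same_edges e : path_edge T e = path_edge T' e.
  have := eq_flow e; rewrite !ffunE.
  by case: (path_edge T e) (path_edge T' e) => [] [] // /eqP;
    rewrite ?(negbTE t_neq0) // eq_sym (negbTE t_neq0).
suff sub T1 T2 : T1 ord_max -> T2 ord_max -> path_edge T1 =1 path_edge T2 ->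
    forall m, T1 m -> T2 m.
  by apply/ffunP => m; apply/idP/idP; apply: sub.
move=> T1n T2n T12 m T1m; have [->//|nm] := eqVneq m ord_max.
have [e T1e <-] := path_edge_from T1m T1n nm.
by move: T1e; rewrite T12 => /and3P[].
Qed.

End PathFlows.

Section AverageFlow.
Variables (R : realFieldType) (n : nat).
Implicit Types (t : R) (e : edge n).

Lemma path_edge_frequency e :
  #|paths_through e|%:R / #|@is_path n|%:R = 2 ^- #|inner_span e| :> R.
Proof.
rewrite card_paths card_paths_through -(cardsID (edge_span e) (~: @path_ends n)).
rewrite expnD natrM !natrX invfM mulrCA mulfV ?mulr1 //.
by rewrite expf_neq0 // pnatr_eq0.
Qed.

Lemma sum_path_flow t e : \sum_(T | is_path T) path_flow t T e =
  #|paths_through e|%:R * t.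
Proof.
under eq_bigr do rewrite ffunE.
by rewrite -big_mkcondr sumr_const mulr_natl.
Qed.

Lemma path_flow_average t e :
  #|@is_path n|%:R^-1 * \sum_(T | is_path T) path_flow t T e
  = t * 2 ^- #|inner_span e|.
Proof. by rewrite sum_path_flow -path_edge_frequency; ring. Qed.

Lemma favg_edge t e :
  favg n t e = t * 2 ^- (minn n (val e).2.+1 - maxn 1 (val e).1).
Proof.
rewrite ffunE; case: e => [[i k] /= ik]; have := ltn_ord k.
by case: eqP => [i0|i0]; case: eqP => [kn|kn] k_le; congr (t * 2 ^- _); lia.
Qed.

Lemma fval_favg t (i j : nat) : (i < j <= n)%N ->
  fval (favg n t) i j = t * 2 ^- (minn n j.+1 - maxn 1 i).
Proof.
move=> /andP[ij jn]; rewrite /fval; case: insubP => [e _ e_val|]; last first.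
  by rewrite /= !inordK //; lia.
by rewrite /= favg_edge e_val /= !inordK //; lia.
Qed.

Lemma sum_halving_powers a : (0 < a)%N ->
  \sum_(k < a) 2 ^- (a.+1 - maxn 1 k) = 2^-1 :> R.
Proof.
elim: a => [//|[_ _|a IH _]]; first by rewrite big_ord1.
rewrite big_ord_recr /= (_ : a.+3 - maxn 1 a.+1 = 2)%N; last by lia.
rewrite (eq_bigr (fun k : 'I_a.+1 => 2^-1 * 2 ^- (a.+2 - maxn 1 k))) => [|k _].
  by rewrite -mulr_sumr IH //; field.
by rewrite -invfM -exprS; congr (_ ^- _); have := ltn_ord k; lia.
Qed.

Lemma matrix_form_favg t : matrix_form (Nvec t) (favg n t) = t *: Amat R n.
Proof.
apply/matrixP => a b; rewrite !mxE; have a_lt := ltn_ord a; have b_lt := ltn_ord b.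
case: ifP => ab_le.
  have ab_lt : (a + b < n)%N by lia.
  rewrite fval_favg; last by lia.
  by case: eqP => a0; case: eqP => b0; rewrite /= ?ab_lt; congr (t * 2 ^- _); lia.
move/negbT: ab_le; rewrite -ltnNge => ab_gt.
have a0 : (a == 0%N :> nat) = false by apply/negbTE; lia.
have b0 : (b == 0%N :> nat) = false by apply/negbTE; lia.
have ab_nlt : (a + b < n)%N = false by apply/negbTE; lia.
rewrite a0 b0 ab_nlt /=.
have [ab_n|_] := eqVneq (a + b)%N n; last by rewrite mulr0.
rewrite lt0n a0 sumrB /=.
have sum_N : \sum_(k < n.+1 | (k < a)%N) Nvec t k = t.
  rewrite (bigD1 ord0) ?lt0n ?a0 //= big1 ?addr0 => [|k /andP[ka k0]].
    by rewrite NvecE eqxx.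
  by rewrite NvecE (negbTE k0) ifF //; apply/negbTE; rewrite -(inj_eq val_inj) /=; lia.
have sum_f : \sum_(k < n.+1 | (k < a)%N) fval (favg n t) k a = t / 2.
  rewrite -(big_ord_widen n.+1 (fun k => fval (favg n t) k a)); last by lia.
  rewrite (eq_bigr (fun k : 'I_a => t * 2 ^- (a.+1 - maxn 1 k))) => [|k _].
    by rewrite -mulr_sumr sum_halving_powers ?lt0n ?a0.
  by rewrite fval_favg; [congr (t * 2 ^- _) | have := ltn_ord k]; lia.
by rewrite sum_N sum_f; field.
Qed.

End AverageFlow.

Theorem proposition4p2 (R : realFieldType) (n : nat) (t : R) :
  (2 <= n)%N -> 0 < t ->
  exists s : seq (flow R n),
    [/\ uniq s,
        (forall g, g \in s <-> is_vertex (in_flow_polytope (Nvec t)) g),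
        (forall e, (size s)%:R^-1 * \sum_(g <- s) g e = favg n t e)
      & matrix_form (Nvec t) (favg n t) = t *: Amat R n].
Proof.
move=> n_ge2 t_gt0; have n_gt0 : (0 < n)%N by apply: ltnW.
exists [seq path_flow t T | T <- enum (@is_path n)]; split.
- rewrite map_inj_in_uniq ?enum_uniq // => T T'; rewrite !mem_enum.
  exact: path_flow_inj (lt0r_neq0 t_gt0).
- move=> g; split.
    case/mapP => T; rewrite mem_enum => pT ->.
    exact: path_flow_is_vertex (ltW t_gt0) pT.
  by case/(vertex_is_path_flow n_gt0 t_gt0) => T pT ->; apply: map_f; rewrite mem_enum.
- move=> e; rewrite size_map -cardE big_map big_enum /= path_flow_average.
  by rewrite favg_edge card_inner_span.
- exact: matrix_form_favg.
Qed.
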